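(* Let $(X_n,\eta_n)$ be a time-homogeneous Markov chain on a locally finite set $\Sigma\subseteq\mathbb{R}_+\times S$ ($S$ finite). Suppose that for some $p>2$ there is $C_p<\infty$ with $\mathbb{E}_{x,i}[|X_{n+1}-X_n|^p]\le C_p$ for all $(x,i)\in\Sigma$, and suppose there exist $c_i\in\mathbb{R}$, $s_i^2\ge0$ (at least one $s_i^2\ne0$) with $\mu_i(x)=c_i/x+o(x^{-1})$ and $\sigma_i^2(x)=s_i^2+o(1)$ as $x\to\infty$. Let $\zeta\in(\frac1{p-1},1)$ and $E_n=\{|X_{n+1}-X_n|\le X_n^\zeta\}$. Then for any $r\in\mathbb{R}$, as $x\to\infty$, \[\mathbb{E}_{x,i}[(X_{n+1}^r-X_n^r)\mathbf 1(E_n)]=rx^{r-2}\Big(c_i+\frac{r-1}2s_i^2+o(1)\Big).\]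
   Context: $\mathbb{E}_{x,i}[\cdot]=\mathbb{E}[\cdot\mid X_n=x,\eta_n=i]$; $\mu_i(x)=\mathbb{E}_{x,i}[X_{n+1}-X_n]$; $\sigma_i^2(x)=\mathbb{E}_{x,i}[(X_{n+1}-X_n)^2]$. *)

From HB Require Import structures.
From mathcomp Require Import all_boot all_order all_algebra.
From mathcomp Require Import all_classical all_reals all_analysis.
Set Implicit Arguments. Unset Strict Implicit. Unset Printing Implicit Defensive.
Import Order.TTheory GRing.Theory Num.Theory.
Local Open Scope classical_set_scope.
Local Open Scope ring_scope.

(* A time-homogeneous Markov chain (X_n, eta_n) on Sigma ⊆ R_+ x S is
   described by its one-step transition probabilities
   P s t = Pr[(X_{n+1},eta_{n+1}) = t | (X_n,eta_n) = s].
   All quantities in the statement are one-step conditional expectations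
   E_{x,i}[ . ], i.e. sums over Sigma weighted by P (x,i) _. *)

Definition locally_finite_state (R : realType) (S : finType)
  (Sig : set (R * S)) : Prop :=
  Sig `<=` [set z | 0 <= z.1] /\
  forall B : R, finite_set (Sig `&` [set z | z.1 <= B]).

Definition transition_kernel (R : realType) (S : finType)
  (Sig : set (R * S)) (P : R * S -> R * S -> R) : Prop :=
  (forall s t, 0 <= P s t) /\
  (forall s, Sig s -> (\esum_(t in Sig) (P s t)%:E)%E = 1%E).

Definition Ecur (R : realType) (S : finType) (Sig : set (R * S))
  (P : R * S -> R * S -> R) (s : R * S) (f : R * S -> R) : R :=
  fine (\esum_(t in Sig) (P s t * Num.max (f t) 0)%:E)%E
  - fine (\esum_(t in Sig) (P s t * Num.max (- f t) 0)%:E)%E.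

Definition mu_drift (R : realType) (S : finType) (Sig : set (R * S))
  (P : R * S -> R * S -> R) (x : R) (i : S) : R :=
  Ecur Sig P (x, i) (fun t => t.1 - x).

Definition sigma2 (R : realType) (S : finType) (Sig : set (R * S))
  (P : R * S -> R * S -> R) (x : R) (i : S) : R :=
  Ecur Sig P (x, i) (fun t => (t.1 - x) ^+ 2).

(* Write t = x y.  On the event |t - x| <= x^zeta we have |y - 1| <= x^(zeta-1) <= 1/2,
   and the second-order Taylor expansion of y^r at 1 gives
     t^r - x^r = r x^(r-1) (t - x) + r (r-1)/2 x^(r-2) (t - x)^2
                 + O(x^(r-2) x^(zeta-1) (t - x)^2).
   Off that event the truncated increment vanishes, while the linear and quadratic
   terms are at most x^(-zeta(p-1)) |t - x|^p and x^(-zeta(p-2)) |t - x|^p.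
   Taking expectations against the p-th moment bound, the truncated increment is
   r x^(r-2) (x mu_i(x) + (r-1)/2 sigma_i^2(x)) up to
   r x^(r-2) O(x^(zeta-1) + x^(1 - zeta(p-1)) + x^(-zeta(p-2))), which is
   r x^(r-2) o(1) because zeta < 1 < zeta (p-1); the asymptotics of mu_i and
   sigma_i^2 conclude. *)

From HB Require Import structures.
From mathcomp Require Import all_boot all_order all_algebra.
From mathcomp Require Import all_classical all_reals all_analysis.
From mathcomp Require Import lra ring.
Set Implicit Arguments. Unset Strict Implicit. Unset Printing Implicit Defensive.
Import Order.TTheory GRing.Theory Num.Theory.
Local Open Scope classical_set_scope.
Local Open Scope ring_scope.

Section PowerTaylor.
Context {R : realType}.
Implicit Types a r y z : R.

Lemma norm_expR_sub1_le z : `|expR z - 1| <= `|z| * expR `|z|.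
Proof.
have e1 := expR_ge1Dx z; have e2 := expR_ge1Dx (- z); have ez := expR_gt0 z.
have ea : 1 <= expR `|z| by rewrite -expR0 ler_expR.
have upper : expR z - 1 <= z * expR z.
  have : (1 - z) * expR z <= expR (- z) * expR z.
    by apply: ler_wpM2r; [exact: ltW | lra].
  rewrite expRN mulVf ?gt_eqF //; nra.
have [z0|z0] := leP 0 z.
  have : 1 <= expR z by rewrite -expR0 ler_expR.
  rewrite (ger0_norm z0) ger0_norm; lra.
have : z * expR z <= 0 by rewrite nmulr_rle0.
have : - z <= - z * expR (- z) by rewrite ler_peMr //; lra.
rewrite [`|z|]ltr0_norm // ler_norml; lra.
Qed.

Lemma norm_ln_le y : `|y - 1| <= 2^-1 -> `|ln y| <= 2 * `|y - 1|.
Proof.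
move=> hy; have y0 : 0 < y by move: hy; rewrite ler_norml; lra.
have upper : ln y <= y - 1.
  by have := @le_ln1Dx R (y - 1); rewrite subrKC; apply; lra.
have lower : y^-1 - 1 <= 2 * `|y - 1|.
  have -> : y^-1 - 1 = (1 - y) / y by rewrite mulrBl mulfV ?gt_eqF ?mul1r.
  rewrite ler_pdivrMr //; have := ler_norm (1 - y); rewrite distrC.
  by move: hy; rewrite ler_norml => /andP[? ?]; have : 0 <= `|y - 1| by []; nra.
have : ln (y^-1) <= y^-1 - 1.
  have := @le_ln1Dx R (y^-1 - 1); rewrite subrKC; apply.
  have : 0 < y^-1 by rewrite invr_gt0.
  lra.
rewrite lnV ?posrE // ler_norml; have := ler_norm (y - 1); lra.
Qed.

Definition lip_powR a : R := 2 * `|a| * expR `|a|.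

Lemma lip_powR_ge0 a : 0 <= lip_powR a.
Proof. by rewrite !mulr_ge0 ?expR_ge0. Qed.

Lemma norm_powR_sub1_le a y : `|y - 1| <= 2^-1 ->
  `|y `^ a - 1| <= lip_powR a * `|y - 1|.
Proof.
move=> hy; have y0 : 0 < y by move: hy; rewrite ler_norml; lra.
have hl := @norm_ln_le y hy.
rewrite /powR gt_eqF //.
have hz : `|a * ln y| <= 2 * `|a| * `|y - 1|.
  by rewrite normrM -mulrA [2 * (_ * _)]mulrCA ler_wpM2l.
have hz1 : `|a * ln y| <= `|a|.
  by apply: (le_trans hz); have : 0 <= `|a| by []; nra.
apply: (le_trans (norm_expR_sub1_le _)).
have : expR `|a * ln y| <= expR `|a| by rewrite ler_expR.
have := expR_gt0 `|a * ln y|; have : 0 <= `|a * ln y| by [].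
have : 0 <= `|y - 1| by []; have : 0 <= `|a| by [].
rewrite /lip_powR; nra.
Qed.

Lemma eq_is_derive (f g : R -> R) (x df dg : R) : is_derive x 1 f df ->
  f =1 g -> df = dg -> is_derive x 1 g dg.
Proof. by move=> + /funext <- <-. Qed.

Lemma mvt_le (f df : R -> R) (a b M : R) : 0 < a -> a <= b ->
  (forall z, 0 < z -> is_derive z 1 f (df z)) ->
  (forall z, a <= z <= b -> `|df z| <= M) ->
  `|f b - f a| <= M * (b - a).
Proof.
move=> a0 ab hd hM.
have hd' z : z \in `]a, b[ -> is_derive z 1 f (df z).
  by rewrite in_itv /= => /andP[z1 _]; apply: hd; lra.
have hc : {in `[a, b], forall z, derivable f z 1}.
  by move=> z; rewrite in_itv /= => /andP[z1 _]; apply: ex_derive; apply: hd; lra.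
have [c cab ->] := MVT_segment ab hd' (derivable_within_continuous hc).
by rewrite normrM [`|b - a|]ger0_norm ?subr_ge0 // ler_wpM2r ?subr_ge0 // hM //;
  move: cab; rewrite in_itv.
Qed.

Lemma mvt_le_at1 (f df : R -> R) (y M : R) : 0 < y ->
  (forall z, 0 < z -> is_derive z 1 f (df z)) ->
  (forall z, `|z - 1| <= `|y - 1| -> `|df z| <= M) ->
  `|f y - f 1| <= M * `|y - 1|.
Proof.
move=> y0 hd hM; have [y1|y1] := leP y 1.
  rewrite distrC [`|y - 1|]distrC [`|1 - y|]ger0_norm ?subr_ge0 //.
  apply: mvt_le => // z /andP[z1 z2]; apply: hM.
  by rewrite distrC (distrC y) !ger0_norm; lra.
rewrite [`|y - 1|]gtr0_norm ?subr_gt0 //; apply: mvt_le => //; first exact: ltW.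
by move=> z /andP[z1 z2]; apply: hM; rewrite !ger0_norm; lra.
Qed.

Definition powR_rem1 a y := y `^ a - 1 - a * (y - 1).
Definition powR_rem2 r y := powR_rem1 r y - r * (r - 1) / 2 * (y - 1) ^+ 2.

Lemma is_derive_powR_rem1 a y : 0 < y ->
  is_derive y 1 (powR_rem1 a) (a * (y `^ (a - 1) - 1)).
Proof.
move=> y0; have dy := is_deriveB (is_derive_id y 1) (is_derive_cst (1 : R) y 1).
apply: eq_is_derive (is_deriveB (is_deriveB (is_derive1_powR a y0)
  (is_derive_cst (1 : R) y 1)) (is_deriveZ a dy)) _ _ => [z|].
  by rewrite /powR_rem1 !fctE.
by rewrite /GRing.scale /=; ring.
Qed.

Lemma is_derive_powR_rem2 r y : 0 < y ->
  is_derive y 1 (powR_rem2 r) (r * powR_rem1 (r - 1) y).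
Proof.
move=> y0; have dy := is_deriveB (is_derive_id y 1) (is_derive_cst (1 : R) y 1).
apply: eq_is_derive (is_deriveB (@is_derive_powR_rem1 r y y0)
  (is_deriveZ (r * (r - 1) / 2) (is_deriveX 2 dy))) _ _ => [z|].
  by rewrite /powR_rem2 !fctE.
by rewrite /powR_rem1 /GRing.scale /= expr1 !fctE; field.
Qed.

Lemma norm_powR_rem1_le a y : `|y - 1| <= 2^-1 ->
  `|powR_rem1 a y| <= `|a| * lip_powR (a - 1) * `|y - 1| ^+ 2.
Proof.
move=> hy; have y0 : 0 < y by move: hy; rewrite ler_norml; lra.
have rem1_at1 : powR_rem1 a 1 = 0 by rewrite /powR_rem1 powR1; ring.
rewrite -[powR_rem1 a y]subr0 -[X in _ - X]rem1_at1 expr2 mulrA.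
apply: (mvt_le_at1 (df := fun z => a * (z `^ (a - 1) - 1)) y0) => [z z0|z hz].
  exact: is_derive_powR_rem1.
rewrite normrM -mulrA ler_wpM2l //.
apply: le_trans (@norm_powR_sub1_le _ z (le_trans hz hy)) _.
by rewrite ler_wpM2l ?lip_powR_ge0.
Qed.

Lemma norm_powR_rem2_le r y : `|y - 1| <= 2^-1 ->
  `|powR_rem2 r y| <= `|r| * `|r - 1| * lip_powR (r - 2) * `|y - 1| ^+ 3.
Proof.
move=> hy; have y0 : 0 < y by move: hy; rewrite ler_norml; lra.
have rem2_at1 : powR_rem2 r 1 = 0 by rewrite /powR_rem2 /powR_rem1 powR1; ring.
rewrite -[powR_rem2 r y]subr0 -[X in _ - X]rem2_at1 exprSr mulrA.
apply: (mvt_le_at1 (df := fun z => r * powR_rem1 (r - 1) z) y0) => [z z0|z hz].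
  exact: is_derive_powR_rem2.
have -> : r - 2 = r - 1 - 1 by ring.
rewrite normrM.
apply: le_trans (ler_wpM2l (normr_ge0 r) (@norm_powR_rem1_le _ z (le_trans hz hy))) _.
rewrite -[X in _ <= X]mulrA -[X in _ <= X]mulrA ler_wpM2l // mulrA.
by rewrite ler_wpM2l ?mulr_ge0 ?lip_powR_ge0 // lerXn2r ?nnegrE.
Qed.

Lemma norm_powR_taylor2_le (r x y d : R) : 0 < x -> d <= 2^-1 -> `|y - x| <= d * x ->
  `|y `^ r - x `^ r - r * x `^ (r - 2) * x * (y - x)
      - r * (r - 1) / 2 * x `^ (r - 2) * (y - x) ^+ 2|
  <= `|r| * `|r - 1| * lip_powR (r - 2) * x `^ (r - 2) * d * `|y - x| ^+ 2.
Proof.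
move=> x0 d_le hyx; pose u := y / x.
have y_eq : y = x * u by rewrite /u mulrC divfK ?gt_eqF.
have u1 : `|u - 1| * x = `|y - x|.
  have -> : y - x = x * (u - 1) by rewrite y_eq; ring.
  by rewrite normrM gtr0_norm // mulrC.
have hu : `|u - 1| <= d by rewrite -(ler_pM2r x0) u1.
have u0 : 0 <= u.
  by move: hu; rewrite ler_norml => /andP[+ _]; have := normr_ge0 (u - 1); lra.
have xr : x `^ r = x `^ (r - 2) * x ^+ 2.
 by rewrite -[x ^+ 2]powR_mulrn ?ltW // -powRD ?(gt_eqF x0) ?implybT // subrK.
have -> : y `^ r - x `^ r - r * x `^ (r - 2) * x * (y - x)
    - r * (r - 1) / 2 * x `^ (r - 2) * (y - x) ^+ 2
    = x `^ (r - 2) * x ^+ 2 * powR_rem2 r u.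
  by rewrite /powR_rem2 /powR_rem1 y_eq (powRM _ (ltW x0) u0) xr; ring.
rewrite normrM ger0_norm ?(mulr_ge0 (powR_ge0 _ _) (sqr_ge0 _)) //.
apply: le_trans (ler_wpM2l _ (norm_powR_rem2_le r (le_trans hu d_le))) _.
  by rewrite mulr_ge0 ?powR_ge0 ?sqr_ge0.
rewrite -u1; set A := `|r| * `|r - 1| * lip_powR (r - 2); set B := x `^ (r - 2).
have AB0 : 0 <= A * B by rewrite !mulr_ge0 ?lip_powR_ge0 ?powR_ge0.
have -> : B * x ^+ 2 * (A * `|u - 1| ^+ 3) = A * B * (`|u - 1| * x) ^+ 2 * `|u - 1|.
  by ring.
have -> : A * B * d * (`|u - 1| * x) ^+ 2 = A * B * (`|u - 1| * x) ^+ 2 * d by ring.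
by apply: ler_wpM2l => //; rewrite mulr_ge0 ?sqr_ge0.
Qed.

End PowerTaylor.

Section PowerBounds.
Context {R : realType}.

Lemma powR_le1D (y k p : R) : 0 <= y -> 0 <= k <= p -> y `^ k <= 1 + y `^ p.
Proof.
move=> y0 /andP[k0 kp]; have := powR_ge0 y p; have [y1|y1] := leP y 1.
  have : y `^ k <= 1 `^ k by apply: ge0_ler_powR; rewrite ?nnegrE.
  by rewrite powR1; lra.
have : y `^ k <= y `^ p by apply: ler_powR => //; exact: ltW.
lra.
Qed.

Lemma powR_le_tail (y k p m : R) : k <= p -> 0 < m -> m <= y ->
  y `^ k <= m `^ (k - p) * y `^ p.
Proof.
move=> kp m0 my; have y0 : 0 < y by exact: lt_le_trans my.
have -> : y `^ p = y `^ k * y `^ (p - k).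
  by rewrite -powRD ?(gt_eqF y0) ?implybT // subrKC.
have mp : m `^ (p - k) <= y `^ (p - k).
  by apply: ge0_ler_powR; rewrite ?nnegrE ?subr_ge0 // ltW.
have mm : m `^ (k - p) * m `^ (p - k) = 1.
  by rewrite -opprB powRN mulVf // gt_eqF // powR_gt0.
have h : 1 <= m `^ (k - p) * y `^ (p - k).
  by rewrite -mm ler_wpM2l // ltW // powR_gt0.
by rewrite mulrCA -[leLHS]mulr1 ler_wpM2l ?powR_ge0.
Qed.

Lemma near_pinfty_powR_le (e d : R) : e < 0 -> 0 < d ->
  \forall x \near +oo, x `^ e <= d.
Proof.
move=> e0 d0; exists (d `^ e^-1); split; first exact: num_real.
move=> x hx; have M0 : 0 < d `^ e^-1 by rewrite powR_gt0.
have x0 : 0 < x by exact: lt_trans hx.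
have : (d `^ e^-1) `^ (- e) <= x `^ (- e).
  by apply: ge0_ler_powR; rewrite ?nnegrE ?oppr_ge0 // ltW.
rewrite -powRrM mulrN mulVf ?lt_eqF // powR_inv1 ?(ltW d0) // powRN.
by rewrite lef_pV2 ?posrE ?powR_gt0 // invrK.
Qed.

Lemma near_pinfty_mul_powR_le (K e d : R) : e < 0 -> 0 < d ->
  \forall x \near +oo, K * x `^ e <= d.
Proof.
move=> e0 d0; have dK : 0 < d / (1 + `|K|) by rewrite divr_gt0 ?ltr_wpDr.
apply: filterS (near_pinfty_powR_le e0 dK) => x hx.
have := powR_ge0 x e; have := ler_norm K; have := normr_ge0 K.
move: hx; rewrite ler_pdivlMr ?ltr_wpDr //; nra.
Qed.

Lemma near_pinfty_inP (D Q : R -> Prop) :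
  (\forall x \near +oo, D x -> Q x) <-> exists M, forall x, D x -> M < x -> Q x.
Proof.
split=> [[M [_ hM]]|[M hM]]; first by exists M => x Dx /hM; apply.
by exists M; split=> [|x /[swap] Dx]; [exact: num_real | exact: hM].
Qed.

End PowerBounds.

Section TruncatedIncrement.
Context {R : realType}.
Variables (r zeta p x : R).
Hypotheses (p_ge2 : 2 <= p) (x_gt0 : 0 < x) (x_zeta : x `^ (zeta - 1) <= 2^-1).

Definition trunc_incr (y : R) : R :=
  (y `^ r - x `^ r) * (if `|y - x| <= x `^ zeta then 1 else 0).

(* Taylor remainder inside the window |y - x| <= x^zeta, then the linear and
   quadratic terms outside it, each paid for by |y - x|^p. *)
Definition trunc_err : R :=
  `|r - 1| * lip_powR (r - 2) * x `^ (zeta - 1) + x `^ (1 - zeta * (p - 1))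
  + `|r - 1| / 2 * x `^ (- (zeta * (p - 2))).

Lemma trunc_err_ge0 : 0 <= trunc_err.
Proof. by rewrite /trunc_err !addr_ge0 ?mulr_ge0 ?lip_powR_ge0 ?powR_ge0 ?divr_ge0. Qed.

Lemma norm_trunc_incr_sub_le y :
  `|trunc_incr y - r * x `^ (r - 2) * x * (y - x)
      - r * (r - 1) / 2 * x `^ (r - 2) * (y - x) ^+ 2|
  <= `|r| * x `^ (r - 2) * trunc_err * (1 + `|y - x| `^ p).
Proof.
have Z0 : 0 <= `|r| * x `^ (r - 2) by rewrite mulr_ge0 ?powR_ge0.
have err_ge0 : 0 <= `|r - 1| * lip_powR (r - 2) * x `^ (zeta - 1).
  by rewrite !mulr_ge0 ?lip_powR_ge0 ?powR_ge0.
have e3_ge0 := powR_ge0 x (1 - zeta * (p - 1)).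
have e4_ge0 : 0 <= `|r - 1| / 2 * x `^ (- (zeta * (p - 2))).
  by rewrite mulr_ge0 ?divr_ge0 ?powR_ge0.
have w_ge0 := powR_ge0 `|y - x| p.
rewrite /trunc_incr; case: ifP => [inner|outer].
  have hd : `|y - x| <= x `^ (zeta - 1) * x.
    by rewrite powRB ?(gt_eqF x_gt0) ?implybT // powRr1 ?(ltW x_gt0) // divfK ?gt_eqF.
  rewrite mulr1; apply: le_trans (norm_powR_taylor2_le r x_gt0 x_zeta hd) _.
  have sq : `|y - x| ^+ 2 <= 1 + `|y - x| `^ p.
    by rewrite -powR_mulrn // powR_le1D // ler0n.
  have : `|r - 1| * lip_powR (r - 2) * x `^ (zeta - 1) <= trunc_err.
    rewrite /trunc_err; lra.
  move: sq; set W := `|y - x| ^+ 2; set K := _ * x `^ (zeta - 1); move=> sq hK.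
  have -> : `|r| * `|r - 1| * lip_powR (r - 2) * x `^ (r - 2) * x `^ (zeta - 1) * W
      = `|r| * x `^ (r - 2) * K * W by rewrite /K; ring.
  apply: ler_pM => //; [exact: mulr_ge0 | exact: sqr_ge0 | exact: ler_wpM2l].
have far : x `^ zeta < `|y - x| by rewrite ltNge outer.
rewrite mulr0 sub0r -opprD normrN.
have m0 : 0 < x `^ zeta by rewrite powR_gt0.
have lin : x * `|y - x| <= x `^ (1 - zeta * (p - 1)) * `|y - x| `^ p.
  have p1 : 1 <= p by apply: le_trans p_ge2; rewrite ler1n.
  have := powR_le_tail p1 m0 (ltW far).
  have ex : x * x `^ (zeta * (1 - p)) = x `^ (1 - zeta * (p - 1)).
    rewrite -{1}(powRr1 (ltW x_gt0)) -powRD ?(gt_eqF x_gt0) ?implybT //.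
    by have -> : 1 + zeta * (1 - p) = 1 - zeta * (p - 1) by ring.
  by rewrite powRr1 // -powRrM -ex -mulrA => /(ler_wpM2l (ltW x_gt0)).
have quad : `|y - x| ^+ 2 <= x `^ (- (zeta * (p - 2))) * `|y - x| `^ p.
  have := powR_le_tail p_ge2 m0 (ltW far).
  rewrite powR_mulrn // -powRrM.
  by have -> : zeta * (2 - p) = - (zeta * (p - 2)) by ring.
have key : x * `|y - x| + `|r - 1| / 2 * `|y - x| ^+ 2
    <= trunc_err * (1 + `|y - x| `^ p).
  have c0 : 0 <= `|r - 1| / 2 by rewrite divr_ge0.
  have := ler_wpM2l c0 quad.
  have : (x `^ (1 - zeta * (p - 1)) + `|r - 1| / 2 * x `^ (- (zeta * (p - 2))))
      * `|y - x| `^ p <= trunc_err * `|y - x| `^ p by rewrite ler_wpM2r // /trunc_err; lra.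
  have := trunc_err_ge0.
  nra.
apply: le_trans (ler_normD _ _) _.
have Z_norm := ger0_norm (powR_ge0 x (r - 2)).
have -> : `|r * x `^ (r - 2) * x * (y - x)| = `|r| * x `^ (r - 2) * (x * `|y - x|).
  by rewrite !normrM Z_norm (gtr0_norm x_gt0); ring.
have -> : `|r * (r - 1) / 2 * x `^ (r - 2) * (y - x) ^+ 2|
    = `|r| * x `^ (r - 2) * (`|r - 1| / 2 * `|y - x| ^+ 2).
  rewrite normrM normrX !normrM normfV Z_norm (@ger0_norm _ 2) //; ring.
by rewrite -mulrDr -[X in _ <= X]mulrA ler_wpM2l.
Qed.

End TruncatedIncrement.

Section Expectation.
Context {R : realType} {S : finType} (Sig : set (R * S)) (P : R * S -> R * S -> R).
Variable s : R * S.
Hypothesis P_ge0 : forall t, 0 <= P s t.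

Implicit Types (f g h : R * S -> R) (a b c K : R).

Local Notation E := (Ecur Sig P s).

Definition Ebar (g : R * S -> R) : \bar R := (\esum_(t in Sig) (P s t * g t)%:E)%E.

Definition Eintegrable (f : R * S -> R) := Ebar (fun t => `|f t|) \is a fin_num.

Lemma Ebar_ge0 g : (forall t, 0 <= g t) -> (0 <= Ebar g)%E.
Proof. by move=> g0; apply: esum_ge0 => t _; rewrite lee_fin mulr_ge0. Qed.

Lemma le_Ebar g h : (forall t, Sig t -> g t <= h t) -> (Ebar g <= Ebar h)%E.
Proof. by move=> gh; apply: le_esum => t St; rewrite lee_fin ler_wpM2l ?gh. Qed.

Lemma eq_Ebar g h : (forall t, Sig t -> g t = h t) -> Ebar g = Ebar h.
Proof. by move=> gh; apply: eq_esum => t St; rewrite gh. Qed.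

Lemma EbarD g h : (forall t, 0 <= g t) -> (forall t, 0 <= h t) ->
  Ebar (fun t => g t + h t) = (Ebar g + Ebar h)%E.
Proof.
move=> g0 h0; rewrite /Ebar -esumD => [|t _|t _]; rewrite ?lee_fin ?mulr_ge0 //.
by apply: eq_esum => t _; rewrite mulrDr EFinD.
Qed.

Lemma EbarZ c g : 0 <= c -> (forall t, 0 <= g t) ->
  Ebar (fun t => c * g t) = (c%:E * Ebar g)%E.
Proof.
move=> c0 g0; have [->|c_neq0] := eqVneq c 0.
  by rewrite mul0e; apply: esum1 => t _; rewrite mul0r mulr0.
have c_gt0 : 0 < c by rewrite lt_def c_neq0 c0.
rewrite /Ebar /esum -ereal_sup_pZl //; congr ereal_sup.
rewrite image_comp; apply: eq_imagel => A _ /=.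
rewrite ge0_mule_fsumr => [|t]; last by rewrite lee_fin mulr_ge0.
by apply: eq_fsbigr => t _; rewrite -EFinM mulrCA.
Qed.

Lemma fine_EFinM_ge0 c (e : \bar R) : 0 <= c -> (0 <= e)%E ->
  fine (c%:E * e)%E = c * fine e.
Proof.
move=> c0; case: e => [e| |] //= _; have [->|c_neq0] := eqVneq c 0.
  by rewrite mul0e mul0r.
by rewrite gt0_muley ?lte_fin ?lt_def ?c_neq0 ?c0 // mulr0.
Qed.

Lemma Ebar_fin_num_le g h : (forall t, 0 <= g t) -> (forall t, Sig t -> g t <= h t) ->
  Ebar h \is a fin_num -> Ebar g \is a fin_num.
Proof.
move=> g0 gh /fin_numPlt/andP[_ h_lt]; rewrite ge0_fin_numE ?Ebar_ge0 //.
exact: le_lt_trans (le_Ebar gh) h_lt.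
Qed.

Lemma max0_ge0 (y : R) : 0 <= Num.max y 0.
Proof. by rewrite le_max lexx orbT. Qed.

Lemma max0_le_norm (y : R) : Num.max y 0 <= `|y|.
Proof. by rewrite ge_max normr_ge0 ler_norm. Qed.

Lemma max0_subN (y : R) : Num.max y 0 - Num.max (- y) 0 = y.
Proof.
have [y0|y0] := leP y 0.
  by rewrite max_l ?sub0r ?opprK // oppr_ge0.
by rewrite max_r ?subr0 // oppr_le0 ltW.
Qed.

Lemma EcurE f : E f =
  fine (Ebar (fun t => Num.max (f t) 0)) - fine (Ebar (fun t => Num.max (- f t) 0)).
Proof. by []. Qed.

Lemma Eintegrable_le f g : (forall t, Sig t -> `|f t| <= g t) ->
  Ebar g \is a fin_num -> Eintegrable f.
Proof. exact: Ebar_fin_num_le (fun t => normr_ge0 (f t)). Qed.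

Lemma Eintegrable_parts f : Eintegrable f ->
  Ebar (fun t => Num.max (f t) 0) \is a fin_num /\
  Ebar (fun t => Num.max (- f t) 0) \is a fin_num.
Proof.
move=> f_int; split; apply: (Ebar_fin_num_le (fun t => max0_ge0 _) _ f_int) => t _.
  exact: max0_le_norm.
by rewrite -normrN; exact: max0_le_norm.
Qed.

Lemma Ecur_split f g h : (forall t, 0 <= g t) -> (forall t, 0 <= h t) ->
  Ebar g \is a fin_num -> Ebar h \is a fin_num ->
  (forall t, Sig t -> f t = g t - h t) -> E f = fine (Ebar g) - fine (Ebar h).
Proof.
move=> g0 h0 g_fin h_fin fgh.
have f_int : Eintegrable f.
  apply: (Eintegrable_le (g := fun t => g t + h t)) => [t St|].
  - by rewrite fgh // (le_trans (ler_normB _ _)) // !ger0_norm.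
  - by rewrite EbarD // fin_numD g_fin.
have [fp_fin fn_fin] := Eintegrable_parts f_int.
have : (Ebar (fun t => Num.max (f t) 0%R) + Ebar h)%E =
       (Ebar (fun t => Num.max (- f t)%R 0%R) + Ebar g)%E.
  rewrite -!EbarD => [|t|t|t|t]; rewrite ?max0_ge0 ?g0 ?h0 //.
  apply: eq_Ebar => t St.
  by have := max0_subN (f t); rewrite fgh //; lra.
move/(congr1 fine); rewrite !fineD // EcurE; lra.
Qed.

Lemma norm_Ecur_le f g : (forall t, 0 <= g t) -> (forall t, Sig t -> `|f t| <= g t) ->
  Ebar g \is a fin_num -> `|E f| <= fine (Ebar g).
Proof.
move=> g0 fg g_fin; have [fp_fin fn_fin] := Eintegrable_parts (Eintegrable_le fg g_fin).
have le_g (k : R * S -> R) : (forall t, Sig t -> `|k t| <= g t) ->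
    fine (Ebar (fun t => Num.max (k t) 0)) <= fine (Ebar g).
  move=> kg; apply: fine_le => //.
    exact: Ebar_fin_num_le (fun t => max0_ge0 _) (fun t St => le_trans (max0_le_norm _) (kg t St)) g_fin.
  by apply: le_Ebar => t St; exact: le_trans (max0_le_norm _) (kg t St).
have := le_g f fg; have := le_g (fun t => - f t) (fun t St => ltac:(rewrite normrN; exact: fg)).
have := fine_ge0 (Ebar_ge0 (fun t => max0_ge0 (f t))).
have := fine_ge0 (Ebar_ge0 (fun t => max0_ge0 (- f t))).
rewrite EcurE ler_norml; lra.
Qed.

Lemma EintegrableD f g : Eintegrable f -> Eintegrable g ->
  Eintegrable (fun t => f t + g t).
Proof.
move=> f_int g_int; apply: (Eintegrable_le (g := fun t => `|f t| + `|g t|)).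
  by move=> t _; exact: ler_normD.
by rewrite EbarD // fin_numD; apply/andP.
Qed.

Lemma EintegrableZ c f : Eintegrable f -> Eintegrable (fun t => c * f t).
Proof.
move=> f_int; apply: (Eintegrable_le (g := fun t => `|c| * `|f t|)).
  by move=> t _; rewrite normrM.
by rewrite EbarZ // fin_numM.
Qed.

Lemma EcurD f g : Eintegrable f -> Eintegrable g ->
  E (fun t => f t + g t) = E f + E g.
Proof.
move=> f_int g_int; have [fp fn] := Eintegrable_parts f_int.
have [gp gn] := Eintegrable_parts g_int.
rewrite (@Ecur_split _ (fun t => Num.max (f t) 0 + Num.max (g t) 0)
                       (fun t => Num.max (- f t) 0 + Num.max (- g t) 0)).
- rewrite !EbarD ?fineD // => [|t|t|t|t]; rewrite ?max0_ge0 // !EcurE; lra.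
- by move=> t; rewrite addr_ge0 ?max0_ge0.
- by move=> t; rewrite addr_ge0 ?max0_ge0.
- by rewrite EbarD ?fin_numD ?fp // => t; exact: max0_ge0.
- by rewrite EbarD ?fin_numD ?fn // => t; exact: max0_ge0.
move=> t _; have := max0_subN (f t); have := max0_subN (g t); lra.
Qed.

Lemma EcurN f : E (fun t => - f t) = - E f.
Proof.
rewrite !EcurE (@eq_Ebar (fun t => Num.max (- - f t) 0) (fun t => Num.max (f t) 0)).
  by rewrite opprB.
by move=> t _; rewrite opprK.
Qed.

Lemma EcurZ c f : E (fun t => c * f t) = c * E f.
Proof.
wlog c0 : c f / 0 <= c.
  move=> Hpos; have [|c_lt0] := leP 0 c; first exact: Hpos.
  have -> : (fun t => c * f t) = (fun t => - (- c * f t)).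
    by apply/funext => t; rewrite mulNr opprK.
  by rewrite EcurN Hpos ?oppr_ge0 ?ltW // mulNr opprK.
rewrite !EcurE (@eq_Ebar (fun t => Num.max (c * f t) 0) (fun t => c * Num.max (f t) 0));
  last by move=> t _; rewrite maxr_pMr // mulr0.
rewrite (@eq_Ebar (fun t => Num.max (- (c * f t)) 0) (fun t => c * Num.max (- f t) 0));
  last by move=> t _; rewrite maxr_pMr // mulr0 mulrN.
rewrite !EbarZ ?fine_EFinM_ge0 ?Ebar_ge0 // => [|t|t|t|t]; rewrite ?max0_ge0 //.
by rewrite mulrBr.
Qed.

Lemma Ecur_affine a b f g h : Eintegrable f -> Eintegrable g -> Eintegrable h ->
  E (fun t => a * f t + b * g t + h t) = a * E f + b * E g + E h.
Proof. by move=> *; rewrite !EcurD ?EintegrableD ?EintegrableZ // !EcurZ. Qed.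

Hypothesis Ebar1 : Ebar (fun=> 1) = 1%E.
Variables (p C : R).
Hypotheses (p_ge2 : 2 <= p)
  (moment : (Ebar (fun t => `|t.1 - s.1| `^ p)%R <= C%:E)%E).

Lemma Ecur_dominated K f : 0 <= K ->
  (forall t, Sig t -> `|f t| <= K * (1 + `|t.1 - s.1| `^ p)) ->
  Eintegrable f /\ `|E f| <= K * (1 + C).
Proof.
move=> K0 fK; pose w (t : R * S) := `|t.1 - s.1| `^ p.
have w0 t : 0 <= w t by exact: powR_ge0.
have w_fin : Ebar w \is a fin_num.
  by rewrite ge0_fin_numE ?Ebar_ge0 // (le_lt_trans moment) ?ltry.
have EbarK : Ebar (fun t => K * (1 + w t)) = (K%:E * (1 + Ebar w))%E.
  by rewrite EbarZ ?EbarD ?Ebar1 // => t; rewrite ?addr_ge0.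
have K_fin : Ebar (fun t => K * (1 + w t)) \is a fin_num.
  by rewrite EbarK fin_numM ?fin_numD ?w_fin.
split; first exact: Eintegrable_le fK K_fin.
apply: le_trans (norm_Ecur_le _ fK K_fin) _ => [t|].
  by rewrite mulr_ge0 ?addr_ge0.
rewrite EbarK fine_EFinM_ge0 ?adde_ge0 ?Ebar_ge0 // fineD // ler_wpM2l // lerD2l.
by rewrite -lee_fin fineK.
Qed.

Lemma Ecur_quadratic_approx f a b K : 0 <= K ->
  (forall t, Sig t -> `|f t - a * (t.1 - s.1) - b * (t.1 - s.1) ^+ 2|
                      <= K * (1 + `|t.1 - s.1| `^ p)) ->
  `|E f - (a * E (fun t => t.1 - s.1) + b * E (fun t => (t.1 - s.1) ^+ 2))|
  <= K * (1 + C).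
Proof.
move=> K0 fK; have [err_int err_le] := Ecur_dominated K0 fK.
have dom (k : R) (t : R * S) : 0 <= k <= p ->
    `|t.1 - s.1| `^ k <= 1 * (1 + `|t.1 - s.1| `^ p).
  by move=> kp; rewrite mul1r powR_le1D.
have lin_int : Eintegrable (fun t => t.1 - s.1).
  apply: (proj1 (Ecur_dominated (f := fun t => t.1 - s.1) ler01 _)) => t _.
  have := dom 1 t; rewrite powRr1 //; apply.
  by rewrite ler01 (le_trans _ p_ge2) // ler1n.
have quad_int : Eintegrable (fun t => (t.1 - s.1) ^+ 2).
  apply: (proj1 (Ecur_dominated (f := fun t => (t.1 - s.1) ^+ 2) ler01 _)) => t _.
  by rewrite normrX -powR_mulrn // dom // ler0n.
have -> : E f = E (fun t => a * (t.1 - s.1) + b * (t.1 - s.1) ^+ 2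
    + (f t - a * (t.1 - s.1) - b * (t.1 - s.1) ^+ 2)).
  by congr Ecur; apply/funext => t; ring.
by rewrite Ecur_affine // addrAC subrr add0r.
Qed.

End Expectation.

Lemma Ecur_trunc_incr_le (R : realType) (S : finType) (Sig : set (R * S))
    (P : R * S -> R * S -> R) (x : R) (i : S) (r zeta p C c s2 : R) :
  (forall t, 0 <= P (x, i) t) -> \esum_(t in Sig) (P (x, i) t)%:E = 1%E ->
  2 <= p -> (\esum_(t in Sig) (P (x, i) t * `|t.1 - x| `^ p)%:E <= C%:E)%E ->
  0 < x -> x `^ (zeta - 1) <= 2^-1 ->
  `|Ecur Sig P (x, i) (fun t => trunc_incr r zeta x t.1)
      - r * x `^ (r - 2) * (c + (r - 1) / 2 * s2)|
  <= `|r| * x `^ (r - 2) * (trunc_err r zeta p x * (1 + C)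
       + x * `|mu_drift Sig P x i - c / x| + `|r - 1| / 2 * `|sigma2 Sig P x i - s2|).
Proof.
move=> P_ge0 P_sum p_ge2 moment x_gt0 x_zeta.
have Ebar1 : Ebar Sig P (x, i) (fun=> 1) = 1%E.
  by rewrite -P_sum; apply: eq_esum => t _; rewrite mulr1.
have K0 : 0 <= `|r| * x `^ (r - 2) * trunc_err r zeta p x.
  by rewrite !mulr_ge0 ?powR_ge0 ?trunc_err_ge0.
have := Ecur_quadratic_approx P_ge0 Ebar1 p_ge2 moment K0
  (fun t _ => norm_trunc_incr_sub_le r p_ge2 x_gt0 x_zeta t.1).
rewrite /= -/(mu_drift Sig P x i) -/(sigma2 Sig P x i).
set T := Ecur _ _ _ _; set mu := mu_drift _ _ _ _; set sg := sigma2 _ _ _ _.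
set Z := x `^ (r - 2) => approx.
have -> : T - r * Z * (c + (r - 1) / 2 * s2) =
    (T - (r * Z * x * mu + r * (r - 1) / 2 * Z * sg))
    + r * Z * (x * (mu - c / x)) + r * Z * ((r - 1) / 2 * (sg - s2)).
  by field; rewrite gt_eqF.
have nB : `|r * Z * (x * (mu - c / x))| = `|r| * Z * (x * `|mu - c / x|).
  by rewrite !normrM (ger0_norm (powR_ge0 _ _)) (gtr0_norm x_gt0).
have nC : `|r * Z * ((r - 1) / 2 * (sg - s2))| = `|r| * Z * (`|r - 1| / 2 * `|sg - s2|).
  by rewrite !normrM normfV (ger0_norm (powR_ge0 _ _)) (@ger0_norm _ 2).
apply: le_trans (ler_normD _ _) _; rewrite nC.
apply: le_trans (lerD (ler_normD _ _) (lexx _)) _; rewrite nB.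
apply: le_trans (lerD (lerD approx (lexx _)) (lexx _)) _.
by rewrite -[_ * (1 + C)]mulrA -!mulrDr.
Qed.

Lemma near_pinfty_trunc_err_le (R : realType) (r zeta p K d : R) :
  zeta < 1 -> 1 < zeta * (p - 1) -> 0 < zeta * (p - 2) -> 0 < d ->
  \forall x \near +oo, K * trunc_err r zeta p x <= d.
Proof.
move=> zeta_lt1 zeta_p zeta_p2 d_gt0; have d3 : 0 < d / 3 by rewrite divr_gt0.
near=> x.
have : K * (`|r - 1| * lip_powR (r - 2)) * x `^ (zeta - 1) <= d / 3.
  by near: x; apply: near_pinfty_mul_powR_le; rewrite ?subr_lt0.
have : K * x `^ (1 - zeta * (p - 1)) <= d / 3.
  by near: x; apply: near_pinfty_mul_powR_le; rewrite ?subr_lt0.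
have : K * (`|r - 1| / 2) * x `^ (- (zeta * (p - 2))) <= d / 3.
  by near: x; apply: near_pinfty_mul_powR_le; rewrite ?oppr_lt0.
rewrite /trunc_err; lra.
Unshelve. all: by end_near.
Qed.

Theorem lemma3p4 (R : realType) (S : finType) (Sig : set (R * S))
  (P : R * S -> R * S -> R) (p Cp : R) (c s2 : S -> R) (zeta : R) :
  locally_finite_state Sig ->
  transition_kernel Sig P ->
  2 < p ->
  (forall s, Sig s ->
     (\esum_(t in Sig) (P s t * (`|t.1 - s.1| `^ p))%:E <= Cp%:E)%E) ->
  (forall i, 0 <= s2 i) ->
  (exists i, s2 i != 0) ->
  (* mu_i(x) = c_i / x + o(1/x) *)
  (forall i (eps : R), 0 < eps -> exists M : R, forall x : R,
     Sig (x, i) -> M < x ->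
     `|mu_drift Sig P x i - c i / x| <= eps / x) ->
  (* sigma_i^2(x) = s_i^2 + o(1) *)
  (forall i (eps : R), 0 < eps -> exists M : R, forall x : R,
     Sig (x, i) -> M < x ->
     `|sigma2 Sig P x i - s2 i| <= eps) ->
  (p - 1)^-1 < zeta -> zeta < 1 ->
  forall (r : R) (i : S) (eps : R), 0 < eps -> exists M : R, forall x : R,
    Sig (x, i) -> M < x ->
    `|Ecur Sig P (x, i)
        (fun t => (t.1 `^ r - x `^ r) *
                  (if `|t.1 - x| <= x `^ zeta then 1 else 0))
      - r * x `^ (r - 2) * (c i + (r - 1) / 2 * s2 i)|
    <= eps * `|r| * x `^ (r - 2).
Proof.
move=> _ [P_ge0 P_sum] p_gt2 moment _ _ mu_asym sigma2_asym zeta_gt zeta_lt1 r i eps eps_gt0.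
have p_ge2 : 2 <= p by exact: ltW.
have zeta_gt0 : 0 < zeta.
  by apply: lt_trans zeta_gt; rewrite invr_gt0 subr_gt0 (lt_trans _ p_gt2) ?ltr1n.
have zeta_p : 1 < zeta * (p - 1).
  by rewrite -ltr_pdivrMr ?div1r // subr_gt0 (lt_trans _ p_gt2) ?ltr1n.
pose e := eps / 5; have e_gt0 : 0 < e by rewrite divr_gt0.
have [M1 near_mu] := mu_asym i e e_gt0.
have [M2 near_sg] :=
  sigma2_asym i (e / (1 + `|r - 1|)) (divr_gt0 e_gt0 (ltr_wpDr (normr_ge0 _) ltr01)).
apply/near_pinfty_inP; near=> x => Sx.
have x_gt0 : 0 < x by near: x; exact: nbhs_pinfty_gt (num_real 0).
have x_zeta : x `^ (zeta - 1) <= 2^-1.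
  by near: x; apply: near_pinfty_powR_le; rewrite ?subr_lt0.
apply: le_trans (Ecur_trunc_incr_le r (c i) (s2 i)
  (P_ge0 _) (P_sum _ Sx) p_ge2 (moment _ Sx) x_gt0 x_zeta) _.
have -> : eps * `|r| * x `^ (r - 2) = `|r| * x `^ (r - 2) * (5 * e).
  by rewrite /e; field.
rewrite /= ler_wpM2l ?mulr_ge0 ?powR_ge0 //.
have : (1 + Cp) * trunc_err r zeta p x <= 3 * e.
  near: x; apply: near_pinfty_trunc_err_le => //.
  - by rewrite mulr_gt0 // subr_gt0.
  - by rewrite mulr_gt0 // ltr_pwDr.
have : x * `|mu_drift Sig P x i - c i / x| <= e.
  rewrite mulrC -ler_pdivlMr // near_mu //.
  by near: x; exact: nbhs_pinfty_gt (num_real _).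
have : `|r - 1| / 2 * `|sigma2 Sig P x i - s2 i| <= e.
  have xM2 : M2 < x by near: x; exact: nbhs_pinfty_gt (num_real _).
  have := near_sg x Sx xM2; rewrite ler_pdivlMr ?ltr_wpDr // mulrAC ler_pdivrMr //.
  have := normr_ge0 (sigma2 Sig P x i - s2 i); have := normr_ge0 (r - 1).
  move=> *; nra.
lra.
Unshelve. all: by end_near.
Qed.
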